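(* Suppose $\mathcal Q$ is vertically unbounded, $m=1$, and $v(p)>H$ (i.e. $v(p)>h$ for every $h\in H$). Then $p$ divides the binomial coefficient $\binom{\ell}{k}$ for every $k\in J$ and every $\ell\in B$ with $\ell>k$.
   Context: Let $(K,v)$ be a valued field and $p$ the characteristic exponent of its residue field ($p=1$ if the residue characteristic is $0$, otherwise $p$ is the residue characteristic); $v(p)$ denotes the value of $p\cdot1\in K$ (so $v(p)=\infty$ if $\mathrm{char}K=p>0$). Let $\Gamma$ be the divisible hull of $vK$, embedded in a divisible ordered abelian group $\Lambda$. Let $\nu\colon K[x]\to\Lambda\cup\{\infty\}$ be a valuation extending $v$ which is well-specified, i.e. it is not the case that simultaneously $\nu^{-1}(\infty)=0$, the value group of $\nu$ modulo $\Gamma$ is torsion, and the residue field of $\nu$ is algebraic over that of $v$. For $s\ge0$ let $\partial_s$ be the $s$-th Hasse–Schmidt derivative, defined by $f(x+y)=\sum_{s\ge0}(\partial_sf)y^s$. For nonconstant $f$ with $\nu(f)<\infty$ the level is $\epsilon_\nu(f)=\max\{(\nu(f)-\nu(\partial_sf))/s: s\ge1\}$; $\epsilon_\nu(a)=-\infty$ for $a\in K$. A monic $Q\in K[x]$ is a key polynomial for $\nu$ if $\epsilon_\nu(f)<\epsilon_\nu(Q)$ whenever $\deg f<\deg Q$. For monic $Q$, each $f$ has a unique $Q$-expansion $f=\sum_{i\ge0}f_{Q,i}Q^i$ with $\deg f_{Q,i}<\deg Q$; set $\nu_Q(f)=\min_i\nu(f_{Q,i}Q^i)$. Fix $m\ge1$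 such that the set $\Psi_m$ of key polynomials of degree $m$ for $\nu$ is nonempty and has no element of maximal $\nu$-value. Let $\mathcal Q\subseteq\Psi_m$ be well-ordered by $Q<R\iff\nu(Q)<\nu(R)$ and cofinal in $\Psi_m$ for $\nu$-values; write $\gamma_Q=\nu(Q)$. As in the paper, all values $\nu_Q(f)$ ($f\ne0$) lie in $\Gamma$. ''For all $Q$ large enough'' means for all $Q$ in a final segment of $\mathcal Q$. $f$ is $\mathcal Q$-stable if $\nu_Q(f)=\nu(f)$ for all $Q$ large enough, $\mathcal Q$-unstable otherwise. Assume unstable polynomials exist; limit key polynomials are the monic $\mathcal Q$-unstable polynomials of minimal degree, forming $\mathrm{KP}_\infty(\mathcal Q)$. Fix $F\in\mathrm{KP}_\infty(\mathcal Q)$, $D=\lfloor\deg F/m\rfloor$, $F=\sum_{\ell=0}^DF_{Q,\ell}Q^\ell$, $\beta_{Q,\ell}=\nu(F_{Q,\ell})\in\Gamma\cup\{\infty\}$. Let $\delta^L$ be the smallest initial segment of $\Gamma$ containing $\{\nu_Q(F):Q\in\mathcal Q\}$; write $x>\delta^L$ if $x\in(\Gamma\setminus\delta^L)\cup\{\infty\}$. Let $J$ be the set of $\ell\in\{0,\dots,D\}$ with $\beta_{Q,\ell}+\ell\gamma_Q>\delta^L$ for all $Q$ large enough, and $B=\{0,\dots,D\}\setminus J$. A cut $\eta=(\eta^L,\eta^R)$ of $\Gamma$ is vertically bounded if for every $x\in\eta^L$ and rational $q>1$ there is $y\in\eta^L$ with $q(y-x)>z-x$ for all $z\in\eta^L$;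 its invariance group is $\{h\in\Gamma:h+\eta^L=\eta^L\}$. Let $\gamma_{\mathcal Q}$ be the cut whose lower set is the smallest initial segment of $\Gamma$ containing $\{\gamma_Q\}$; $\mathcal Q$ is vertically unbounded if $\gamma_{\mathcal Q}$ is not vertically bounded; $H$ is the invariance group of $\gamma_{\mathcal Q}$. *)

From HB Require Import structures.
From mathcomp Require Import all_boot all_order all_algebra.
Set Implicit Arguments. Unset Strict Implicit. Unset Printing Implicit Defensive.
Import Order.TTheory GRing.Theory Num.Theory.
Local Open Scope ring_scope.

(* Divisible ordered abelian groups.  A divisible torsion-free abelian  *)
(* group is (uniquely) a Q-vector space, so we model the divisible      *)
(* ordered abelian group Lambda as a Q-vector space with a total order  *)
(* compatible with addition.                                            *)
Record divOAG := DivOAG {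
  oag_car :> lmodType rat;
  oag_le : rel oag_car;
  oag_refl : reflexive oag_le;
  oag_trans : transitive oag_le;
  oag_anti : antisymmetric oag_le;
  oag_total : total oag_le;
  oag_addr : forall x y z, oag_le x y -> oag_le (x + z) (y + z)
}.

Section Ext.
Variable L : divOAG.

Definition oag_lt (x y : L) := oag_le x y && (x != y).

(* Lambda u {oo} is represented by option L, None = oo. *)
Definition oadd (a b : option L) : option L :=
  match a, b with Some x, Some y => Some (x + y) | _, _ => None end.
Definition onat (a : option L) (n : nat) : option L :=
  match a with Some x => Some (x *+ n) | None => None end.
Definition ole (a b : option L) : bool :=
  match a, b with
  | _, None => true
  | None, Some _ => false
  | Some x, Some y => oag_le x y
  end.
Definition olt (a b : option L) : bool := ole a b && (a != b).
Definition omin (a b : option L) : option L := if ole a b then a else b.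

Inductive xval := NegInf | Fin of L | PosInf.
Definition xle (a b : xval) : bool :=
  match a, b with
  | NegInf, _ => true
  | _, PosInf => true
  | Fin x, Fin y => oag_le x y
  | _, _ => false
  end.
Definition xlt (a b : xval) : bool := xle a b && ~~ xle b a.
Definition xmax (a b : xval) : xval := if xle a b then b else a.
End Ext.

Section Valued.
Variables (K : fieldType) (L : divOAG).

Definition is_valuation (v : K -> option L) : Prop :=
  [/\ forall a, v a = None <-> a = 0,
      forall a b, v (a * b) = oadd (v a) (v b) &
      forall a b, ole (omin (v a) (v b)) (v (a + b))].

(* valuation nu on K[x] (possibly with nontrivial support) extending v *)
Definition is_poly_valuation_ext (v : K -> option L)
    (nu : {poly K} -> option L) : Prop :=
  [/\ forall c, nu c%:P = v c,
      forall f g, nu (f * g) = oadd (nu f) (nu g) &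
      forall f g, ole (omin (nu f) (nu g)) (nu (f + g))].

(* value group vK and its divisible hull Gamma inside Lambda *)
Definition Gam (v : K -> option L) (x : L) : Prop :=
  exists n : nat, (0 < n)%N /\ exists a : K, v a = Some (x *+ n).

(* characteristic exponent of the residue field of v:
   the residue characteristic is the prime q with v(q) > 0, if any. *)
Definition char_exp (v : K -> option L) (p : nat) : Prop :=
  (prime p /\ olt (Some 0) (v p%:R)) \/
  (p = 1%N /\ forall q, prime q -> ~ olt (Some 0) (v q%:R)).

Definition trivial_support (nu : {poly K} -> option L) : Prop :=
  forall f, nu f = None -> f = 0.
Definition valgroup_torsion_mod_Gamma (v : K -> option L)
    (nu : {poly K} -> option L) : Prop :=
  forall f g a b, nu f = Some a -> nu g = Some b ->
    exists n : nat, (0 < n)%N /\ Gam v ((a - b) *+ n).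
(* The residue field of nu consists of the residues of f/g with
   nu(g) < oo and nu(g) <= nu(f); such a residue is algebraic over the
   residue field of v iff it is a root of a polynomial with
   v-integral coefficients a_0..a_n, a_n a v-unit. *)
Definition residue_algebraic (v : K -> option L)
    (nu : {poly K} -> option L) : Prop :=
  forall f g b, nu g = Some b -> ole (Some b) (nu f) ->
    exists n : nat, (0 < n)%N /\ exists a : nat -> K,
      [/\ forall i, (i <= n)%N -> ole (Some 0) (v (a i)),
          v (a n) = Some 0 &
          olt (Some (b *+ n))
              (nu (\sum_(i < n.+1) (a i)%:P * f ^+ i * g ^+ (n - i)))].
Definition well_specified (v : K -> option L) (nu : {poly K} -> option L) :=
  ~ [/\ trivial_support nu, valgroup_torsion_mod_Gamma v nu &
        residue_algebraic v nu].

(* Hasse-Schmidt derivatives: nderivn s f = \partial_s f. *)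
(* level epsilon_nu(f); for nonconstant f with nu(f) = oo we use the
   value +oo given by the defining formula. *)
Definition level (nu : {poly K} -> option L) (f : {poly K}) : xval L :=
  if (size f <= 1)%N then NegInf L else
  match nu f with
  | None => PosInf L
  | Some a =>
      foldr (fun s acc =>
               xmax (match nu (nderivn s f) with
                     | Some b => Fin ((s%:R : rat)^-1 *: (a - b))
                     | None => NegInf L
                     end) acc)
            (NegInf L) (iota 1 (size f).-1)
  end.

Definition key_poly (nu : {poly K} -> option L) (Q : {poly K}) : Prop :=
  Q \is monic /\
  forall f : {poly K}, (size f < size Q)%N -> xlt (level nu f) (level nu Q).

Definition Psi (nu : {poly K} -> option L) (m : nat) (Q : {poly K}) : Prop :=
  key_poly nu Q /\ (size Q).-1 = m.

(* Q-expansion coefficients f_{Q,i} and truncation nu_Q *)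
Definition qcoef (Q f : {poly K}) (i : nat) : {poly K} := (f %/ Q ^+ i) %% Q.
Definition nuQ (nu : {poly K} -> option L) (Q f : {poly K}) : option L :=
  foldr (@omin L) None
        [seq nu (qcoef Q f i * Q ^+ i) | i <- iota 0 (size f)].

(* "for all Q in Qs large enough" *)
Definition eventually (nu : {poly K} -> option L) (Qs : {poly K} -> Prop)
    (P : {poly K} -> Prop) : Prop :=
  exists Q0, Qs Q0 /\ forall Q, Qs Q -> ole (nu Q0) (nu Q) -> P Q.

Definition stable (nu : {poly K} -> option L) (Qs : {poly K} -> Prop) (f : {poly K}) : Prop :=
  eventually nu Qs (fun Q => nuQ nu Q f = nu f).

Definition limit_key_poly (nu : {poly K} -> option L) (Qs : {poly K} -> Prop) (F : {poly K}) : Prop :=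
  [/\ F \is monic, ~ stable nu Qs F &
      forall g : {poly K}, g \is monic -> ~ stable nu Qs g ->
        (size F <= size g)%N].

(* lower set delta^L: smallest initial segment of Gamma containing
   { nu_Q(F) : Q in Qs } *)
Definition deltaL (v : K -> option L) (nu : {poly K} -> option L)
    (Qs : {poly K} -> Prop) (F : {poly K}) (x : L) : Prop :=
  Gam v x /\ exists Q, Qs Q /\ ole (Some x) (nuQ nu Q F).
(* y > delta^L  iff  y in (Gamma \ delta^L) u {oo} *)
Definition above_deltaL v nu Qs F (y : option L) : Prop :=
  match y with
  | None => True
  | Some x => Gam v x /\ ~ deltaL v nu Qs F x
  end.

Definition Jset v nu Qs (F : {poly K}) (l : nat) : Prop :=
  (l <= (size F).-1 %/ 1)%N /\
  eventually nu Qs (fun Q =>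
     above_deltaL v nu Qs F (oadd (nu (qcoef Q F l)) (onat (nu Q) l))).
Definition Bset v nu Qs (F : {poly K}) (l : nat) : Prop :=
  (l <= (size F).-1 %/ 1)%N /\ ~ Jset v nu Qs F l.

(* lower set of the cut gamma_Qs *)
Definition gammaL (v : K -> option L) (nu : {poly K} -> option L)
    (Qs : {poly K} -> Prop) (x : L) : Prop :=
  Gam v x /\ exists Q, Qs Q /\ ole (Some x) (nu Q).
End Valued.

(* cuts of Gamma given by their lower set *)
Definition vert_bounded (L : divOAG) (eL : L -> Prop) :=
  forall x, eL x -> forall q : rat, 1 < q ->
    exists y, eL y /\ forall z, eL z -> oag_lt (z - x) (q *: (y - x)).
Definition invariance_group (L : divOAG) (G : L -> Prop) (eL : L -> Prop)
    (h : L) : Prop :=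
  G h /\ (forall x, eL x -> eL (h + x)) /\
         (forall y, eL y -> exists x, eL x /\ y = h + x).

From mathcomp Require Import all_boot all_order all_algebra zify ring.
From Stdlib Require Import Classical.
Set Implicit Arguments. Unset Strict Implicit. Unset Printing Implicit Defensive.
Import GRing.Theory Num.Theory.
Local Open Scope ring_scope.

(* Since m = 1, every Q in the family is X - a_Q, its Q-expansion is the Taylor
   expansion at a_Q, and the terms have values T_j(Q) = v(d_j F(a_Q)) + j nu(Q);
   moreover v(a_R - a_Q) = nu(Q) for Q < R.  For k > 0 the Hasse derivative
   d_k F has degree below deg F, hence is stable, which forces
   nu(d_k F) = v(d_k F(a_R)) for all large R.  If p does not divide C(l,k) then
   v(C(l,k)) = 0, and d_(l-k) d_k F = C(l,k) d_l F gives T_k(R) <= T_l(R) for all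
   large R, so k in J would force l in J.  The index 0 is never in J: otherwise
   the minimum of the expansion would eventually be attained at positive indices,
   where the term values grow with slope j in nu(Q); this makes the minimum
   eventually attained at a unique index, and Taylor's formula between two roots
   then yields T_0 = nu_R(F), which lies in delta^L. *)

Section DivOAGTheory.
Variable L : divOAG.
Implicit Types b c d x y z : L.
Local Notation le := (@oag_le L).

Lemma oag_le_refl x : le x x. Proof. exact: oag_refl. Qed.

Lemma oag_le_trans y x z : le x y -> le y z -> le x z.
Proof. exact: oag_trans. Qed.

Lemma oag_le_anti x y : le x y -> le y x -> x = y.
Proof. by move=> hxy hyx; apply: oag_anti; rewrite hxy hyx. Qed.

Lemma oag_le_total x y : le x y || le y x. Proof. exact: oag_total. Qed.

Lemma oag_leD2r z x y : le (x + z) (y + z) = le x y.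
Proof.
apply/idP/idP; last exact: oag_addr.
by move=> /(oag_addr (- z)); rewrite !addrK.
Qed.

Lemma oag_leD2l z x y : le (z + x) (z + y) = le x y.
Proof. by rewrite [z + x]addrC [z + y]addrC oag_leD2r. Qed.

Lemma oag_leD x y z t : le x y -> le z t -> le (x + z) (y + t).
Proof.
move=> hxy hzt; apply: (@oag_le_trans (y + z)); first by rewrite oag_leD2r.
by rewrite oag_leD2l.
Qed.

Lemma oag_subr_ge0 x y : le 0 (y - x) = le x y.
Proof. by rewrite -(oag_leD2r x) subrK add0r. Qed.

Lemma oag_mulrnI n : (0 < n)%N -> injective (fun x : L => x *+ n).
Proof.
move=> n_gt0 x y /= e.
have n_neq0 : (n%:R : rat) != 0 by rewrite pnatr_eq0 -lt0n.
by rewrite -[x]scale1r -[y]scale1r -(mulVf n_neq0) -!scalerA !scaler_nat e.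
Qed.

Lemma oag_mulrn_ge0 x n : le 0 x -> le 0 (x *+ n).
Proof.
move=> hx; elim: n => [|n IH]; first by rewrite mulr0n oag_le_refl.
by rewrite mulrS -[0](addr0 0); apply: oag_leD.
Qed.

Lemma oag_addr_pmulrn_nle b d i : oag_lt 0 d -> (0 < i)%N -> ~~ le (b + d *+ i) b.
Proof.
case/andP=> d_ge0 d_neq0 i_gt0; apply/negP => h.
have e : d *+ i = 0 *+ i.
  by rewrite mul0rn; apply: oag_le_anti (oag_mulrn_ge0 i d_ge0); rewrite -(oag_leD2l b) addr0.
by move: d_neq0; rewrite (oag_mulrnI i_gt0 e) eqxx.
Qed.

Lemma oag_affine_steeper_nle b0 b c d j0 j : le (b0 + c *+ j0) (b + c *+ j) ->
  oag_lt 0 d -> (j0 < j)%N -> ~~ le (b + (c + d) *+ j) (b0 + (c + d) *+ j0).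
Proof.
move=> h hd hj; apply/negP; rewrite !mulrnDl !addrA => h'.
have : le (d *+ j) (d *+ j0).
  rewrite -(oag_leD2l (b + c *+ j)); apply: oag_le_trans h' _.
  by rewrite oag_leD2r.
rewrite -(subnKC (ltnW hj)) mulrnDr; apply/negP.
by apply: oag_addr_pmulrn_nle => //; rewrite subn_gt0.
Qed.

End DivOAGTheory.

Section ExtendedOrder.
Variable L : divOAG.
Implicit Types a b c d : option L.

Lemma ole_refl a : ole a a. Proof. by case: a => //= x; apply: oag_le_refl. Qed.

Lemma ole_trans a b c : ole a b -> ole b c -> ole a c.
Proof. by case: a; case: b; case: c => //= x y z; apply: oag_le_trans. Qed.

Lemma ole_anti a b : ole a b -> ole b a -> a = b.
Proof. by case: a; case: b => //= x y hyx hxy; rewrite (oag_le_anti hxy hyx). Qed.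

Lemma ole_total a b : ole a b || ole b a.
Proof. by case: a; case: b => //= x y; apply: oag_le_total. Qed.

Lemma ole_None a : ole a None. Proof. by case: a. Qed.

Lemma oltNge a b : olt a b = ~~ ole b a.
Proof.
rewrite /olt; apply/andP/idP => [[hab /eqP nab]|nba].
  by apply/negP => hba; apply: nab; apply: ole_anti.
have hab : ole a b by case/orP: (ole_total a b) => // hba; rewrite hba in nba.
by split => //; apply/eqP => eab; rewrite eab ole_refl in nba.
Qed.

Lemma oleNgt a b : ole a b = ~~ olt b a. Proof. by rewrite oltNge negbK. Qed.

Lemma olt_le a b : olt a b -> ole a b. Proof. by case/andP. Qed.

Lemma olt_le_trans a b c : olt a b -> ole b c -> olt a c.
Proof.
rewrite !oltNge => /negP nba hbc; apply/negP => hca; apply: nba.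
exact: ole_trans hbc hca.
Qed.

Lemma ole_lt_trans a b c : ole a b -> olt b c -> olt a c.
Proof.
rewrite !oltNge => hab /negP ncb; apply/negP => hca; apply: ncb.
exact: ole_trans hca hab.
Qed.

Lemma olt_trans a b c : olt a b -> olt b c -> olt a c.
Proof. by move=> hab /olt_le; apply: olt_le_trans. Qed.

Lemma oaddC a b : oadd a b = oadd b a.
Proof. by case: a; case: b => //= x y; rewrite addrC. Qed.

Lemma oaddA a b c : oadd a (oadd b c) = oadd (oadd a b) c.
Proof. by case: a; case: b; case: c => //= x y z; rewrite addrA. Qed.

Lemma oadd0 a : oadd a (Some 0) = a. Proof. by case: a => //= x; rewrite addr0. Qed.

Lemma ole_oadd2l x a b : ole (oadd (Some x) a) (oadd (Some x) b) = ole a b.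
Proof. by case: a; case: b => //= y z; rewrite oag_leD2l. Qed.

Lemma oadd_ge0_gt0 a b : ole (Some 0) a -> olt (Some 0) b -> olt (Some 0) (oadd a b).
Proof.
case: a => [x|]; case: b => [y|] //= hx; rewrite !oltNge /= => ny.
apply/negP => h; move/negP: ny; apply; apply: (oag_le_trans _ h).
by rewrite -{1}[y]add0r oag_leD2r.
Qed.

Lemma olt_Some_subr_gt0 (x y : L) : olt (Some x) (Some y) -> oag_lt 0 (y - x).
Proof.
case/andP=> /= hxy nxy; rewrite /oag_lt oag_subr_ge0 hxy eq_sym subr_eq0.
by apply: contra nxy => /eqP ->.
Qed.

Lemma olt_affine_steeper b0 b (c0 c1 : L) j0 j : olt (Some c0) (Some c1) -> (j0 < j)%N ->
  b0 != None -> ole (oadd b0 (Some (c0 *+ j0))) (oadd b (Some (c0 *+ j))) ->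
  olt (oadd b0 (Some (c1 *+ j0))) (oadd b (Some (c1 *+ j))).
Proof.
move=> /olt_Some_subr_gt0 hc hj; case: b0 => // x0 _; case: b => [x|] h; last by [].
by rewrite oltNge /= -(subrKC c0 c1); apply: oag_affine_steeper_nle h hc hj.
Qed.

Lemma omin_l a b : ole (omin a b) a.
Proof.
rewrite /omin; case: ifP => [_|nab]; first exact: ole_refl.
by case/orP: (ole_total a b) => //; rewrite nab.
Qed.

Lemma omin_r a b : ole (omin a b) b.
Proof. by rewrite /omin; case: ifP => // _; apply: ole_refl. Qed.

Lemma ole_omin c a b : ole c a -> ole c b -> ole c (omin a b).
Proof. by rewrite /omin; case: ifP. Qed.

Lemma omin_eq a b : omin a b = a \/ omin a b = b.
Proof. by rewrite /omin; case: ifP; auto. Qed.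

Definition ominl (s : seq (option L)) : option L := foldr (@omin L) None s.

Lemma ominl_le s a : a \in s -> ole (ominl s) a.
Proof.
elim: s => //= b s IH; rewrite inE => /orP [/eqP ->|hs]; first exact: omin_l.
exact: ole_trans (omin_r _ _) (IH hs).
Qed.

Lemma ominl_mem s : s != [::] -> ominl s \in s.
Proof.
elim: s => [//|a [|a' s] IH _]; first by rewrite /ominl /= /omin ole_None mem_seq1.
rewrite [ominl _]/=; case: (omin_eq a (ominl (a' :: s))) => ->; first exact: mem_head.
by rewrite inE IH ?orbT.
Qed.

Lemma ominl_oaddl (T : Type) x (f : T -> option L) s :
  ominl [seq oadd (Some x) (f i) | i <- s] = oadd (Some x) (ominl [seq f i | i <- s]).
Proof.
by elim: s => //= i s; rewrite /ominl /= => ->; rewrite /omin ole_oadd2l; case: ifP.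
Qed.

End ExtendedOrder.

Section HasseDerivatives.
Variable R : comNzRingType.
Implicit Types f : {poly R}.

Lemma bin_trinomial i j m :
  ('C(i + (j + m), i) * 'C(j + m, j) = 'C(i + j + m, i + j) * 'C(i + j, i))%N.
Proof.
have e1 := bin_fact (leq_addr (j + m) i); rewrite addKn addnA in e1.
have e2 := bin_fact (leq_addr m j); rewrite addKn in e2.
have e3 := bin_fact (leq_addr m (i + j)); rewrite addKn in e3.
have e4 := bin_fact (leq_addr j i); rewrite addKn in e4.
apply/eqP; rewrite -(@eqn_pmul2r (i`! * j`! * m`!)) ?muln_gt0 ?fact_gt0 //; apply/eqP.
transitivity ('C(i + j + m, i) * (i`! * ('C(j + m, j) * (j`! * m`!))))%N.
  by rewrite addnA; ring.
by rewrite e2 e1 -e3 -e4; ring.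
Qed.

Lemma nderivn_nderivn f i j : f^`N(i)^`N(j) = f^`N(i + j) *+ 'C(i + j, i).
Proof.
apply/polyP => k; rewrite coefMn !coef_nderivn -!mulrnA.
by rewrite -addnA bin_trinomial addnA.
Qed.

Lemma size_nderivn_lt f j : f != 0 -> (0 < j)%N -> (size f^`N(j) < size f)%N.
Proof.
move=> f_neq0 j_gt0; apply: leq_ltn_trans (size_poly _ _) _.
by move: (size_poly_gt0 f); rewrite f_neq0; lia.
Qed.

Lemma taylor_XsubC f a : f = \sum_(i < size f) (f^`N(i)).[a]%:P * ('X - a%:P) ^+ i.
Proof.
rewrite {1}(_ : f = f^:P.[a%:P + ('X - a%:P)]); last first.
  by rewrite addrC subrK -/(comp_poly 'X f) comp_polyXr.
rewrite nderiv_taylor; last exact: mulrC.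
rewrite size_map_polyC; apply: eq_bigr => i _.
by rewrite nderivn_map horner_map.
Qed.

Lemma nderivn_horner0_eq0 f a :
  (forall j, (j < size f)%N -> (f^`N(j)).[a] = 0) -> f = 0.
Proof. by move=> h; rewrite (taylor_XsubC f a) big1 // => i _; rewrite h // mul0r. Qed.

Definition lin_root f : R := - f`_0.

Lemma monic_size2_XsubC f : f \is monic -> size f = 2 -> f = 'X - (lin_root f)%:P.
Proof.
move=> /monicP f_monic f_size; rewrite /lin_root polyCN opprK.
apply/polyP => [[|[|i]]]; rewrite coefD coefX coefC /=; first by rewrite add0r.
  by rewrite addr0 -f_monic lead_coefE f_size.
by rewrite addr0 nth_default // f_size.
Qed.

End HasseDerivatives.

Section ExpansionXsubC.
Variables (K : fieldType) (a : K).
Local Notation Q := ('X - a%:P).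

Definition taylor_sum (c : nat -> K) n := \sum_(j < n) (c j)%:P * Q ^+ j.

Lemma taylor_sumS c n : taylor_sum c n.+1 = taylor_sum (c \o succn) n * Q + (c 0%N)%:P.
Proof.
rewrite /taylor_sum big_ord_recl expr0 mulr1 addrC mulr_suml; congr (_ + _).
by apply: eq_bigr => j _; rewrite -mulrA -exprSr.
Qed.

Lemma divp_taylor_sum c n : taylor_sum c n.+1 %/ Q = taylor_sum (c \o succn) n.
Proof. by rewrite taylor_sumS divp_addl_mul_small // size_XsubC ltnS size_polyC_leq1. Qed.

Lemma divpX_taylor_sum c n i :
  taylor_sum c n %/ Q ^+ i = taylor_sum (fun j => c (j + i)%N) (n - i).
Proof.
elim: i => [|i IH].
  by rewrite expr0 divp1 subn0; apply: eq_bigr => j _; rewrite addn0.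
rewrite exprSr -divp_divl IH subnS; case: (n - i)%N => [|m] /=.
  by rewrite /taylor_sum !big_ord0 div0p.
by rewrite divp_taylor_sum; apply: eq_bigr => j _; rewrite /= addSnnS.
Qed.

Lemma horner_taylor_sum c n : (taylor_sum c n).[a] = if (0 < n)%N then c 0%N else 0.
Proof.
case: n => [|n]; first by rewrite /taylor_sum big_ord0 horner0.
by rewrite taylor_sumS hornerD hornerM hornerXsubC subrr mulr0 add0r hornerC.
Qed.

Lemma qcoef_XsubC f i : qcoef Q f i = (f^`N(i)).[a]%:P.
Proof.
rewrite /qcoef modp_XsubC {1}(taylor_XsubC f a).
rewrite -[\sum_(_ < _) _]/(taylor_sum (fun j => (f^`N(j)).[a]) (size f)).
rewrite divpX_taylor_sum horner_taylor_sum.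
by rewrite subn_gt0 add0n; case: ltnP => // hi; rewrite nderivn_poly0 // horner0.
Qed.

End ExpansionXsubC.

Section RingValuation.
Variables (L : divOAG) (R : comNzRingType).

Definition ring_valuation (w : R -> option L) : Prop :=
  [/\ w 0 = None, w 1 = Some 0,
      forall x y, w (x * y) = oadd (w x) (w y) &
      forall x y, ole (omin (w x) (w y)) (w (x + y))].

Variable w : R -> option L.
Hypothesis hw : ring_valuation w.

Lemma val0 : w 0 = None. Proof. by case: hw. Qed.
Lemma val1 : w 1 = Some 0. Proof. by case: hw. Qed.
Lemma valM x y : w (x * y) = oadd (w x) (w y). Proof. by case: hw. Qed.
Lemma valD x y : ole (omin (w x) (w y)) (w (x + y)). Proof. by case: hw. Qed.

Lemma valN1 : w (-1) = Some 0.
Proof.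
have := valM (-1) (-1); rewrite mulrNN mulr1 val1.
case: (w (-1)) => //= y [] e; congr Some.
by apply: (@oag_mulrnI L 2) => //=; rewrite mulr2n -e mul0rn.
Qed.

Lemma valN x : w (- x) = w x.
Proof. by rewrite -mulN1r valM valN1 oaddC oadd0. Qed.

Lemma valB x y : ole (omin (w x) (w y)) (w (x - y)).
Proof. by rewrite -(valN y); apply: valD. Qed.

Lemma valX x c n : w x = Some c -> w (x ^+ n) = Some (c *+ n).
Proof.
move=> hx; elim: n => [|n IH]; first by rewrite expr0 val1 mulr0n.
by rewrite exprS valM IH hx /= mulrS.
Qed.

Lemma val_natr_ge0 n : ole (Some 0) (w n%:R).
Proof.
elim: n => [|n IH]; first by rewrite mulr0n val0.
by rewrite -natr1; apply: (ole_trans _ (valD _ _)); apply: ole_omin; rewrite ?val1 ?ole_refl.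
Qed.

Lemma val_sum_ge (I : Type) (r : seq I) (P : pred I) (f : I -> R) c :
  (forall i, P i -> ole c (w (f i))) -> ole c (w (\sum_(i <- r | P i) f i)).
Proof.
move=> h; apply: (big_ind (fun x => ole c (w x))) => //; first by rewrite val0 ole_None.
by move=> x y hx hy; apply: (ole_trans _ (valD _ _)); apply: ole_omin.
Qed.

Lemma val_sum_gt (I : Type) (r : seq I) (P : pred I) (f : I -> R) c : c != None ->
  (forall i, P i -> olt c (w (f i))) -> olt c (w (\sum_(i <- r | P i) f i)).
Proof.
move=> c_fin h; apply: (big_ind (fun x => olt c (w x))) => //.
  by rewrite val0 /olt ole_None c_fin.
by move=> x y hx hy; apply: (olt_le_trans _ (valD _ _)); case: (omin_eq (w x) (w y)) => ->.
Qed.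

Lemma val_addl_lt x y : olt (w x) (w y) -> w (x + y) = w x.
Proof.
move=> hxy; apply: ole_anti; last first.
  by apply: (ole_trans _ (valD _ _)); apply: ole_omin; [apply: ole_refl | apply: olt_le].
have := valB (x + y) y; rewrite addrK.
case: (omin_eq (w (x + y)) (w y)) => -> // hyx.
by move: hxy; rewrite oltNge hyx.
Qed.

Lemma val_sum_min_unique n (f : nat -> R) i0 : (i0 < n)%N -> w (f i0) != None ->
  (forall i, (i < n)%N -> i != i0 -> olt (w (f i0)) (w (f i))) ->
  w (\sum_(i < n) f i) = w (f i0).
Proof.
move=> lt_i0n fin h; rewrite (bigD1 (Ordinal lt_i0n)) //=; apply: val_addl_lt.
by apply: val_sum_gt => // i hi; apply: h.
Qed.

Lemma val_natr_coprime p m : prime p -> olt (Some 0) (w p%:R) -> ~~ (p %| m)%N ->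
  w m%:R = Some 0.
Proof.
move=> p_prime vp_gt0 p_ndvd; apply: ole_anti; last exact: val_natr_ge0.
rewrite oleNgt; apply/negP => vm_gt0.
have cop : coprime p m by rewrite prime_coprime.
case: (egcdnP m (prime_gt0 p_prime)) => u u' e _; rewrite (eqP cop) in e.
have bezout : (1 : R) = u%:R * p%:R - u'%:R * m%:R.
  by rewrite -!natrM e natrD [X in X - _]addrC addrK.
have := valB (u%:R * p%:R) (u'%:R * m%:R); rewrite -bezout val1.
have [up_gt0 um_gt0] : olt (Some 0) (w (u%:R * p%:R)) /\ olt (Some 0) (w (u'%:R * m%:R)).
  by rewrite !valM; split; apply: oadd_ge0_gt0 => //; apply: val_natr_ge0.
by case: (omin_eq (w (u%:R * p%:R)) (w (u'%:R * m%:R))) => -> h;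
  [move: up_gt0 | move: um_gt0]; rewrite oltNge h.
Qed.

Lemma val_taylor_ge (g : {poly R}) x y b c : w (y - x) = Some c ->
  (forall j, ole (Some b) (oadd (w (g^`N(j)).[x]) (Some (c *+ j)))) ->
  forall i, ole (Some (b - c *+ i)) (w (g^`N(i)).[y]).
Proof.
move=> hyx hb i; rewrite (_ : y = x + (y - x)); last by rewrite addrC subrK.
rewrite nderiv_taylor; last exact: mulrC.
apply: val_sum_ge => j _; rewrite valM (valX _ hyx) nderivn_nderivn hornerMn.
rewrite -mulr_natr valM; have := hb (i + j)%N; have := val_natr_ge0 'C(i + j, i).
case: (w _) => [z|] //=; case: (w _) => [t|] //= z_ge0 hbt.
rewrite -(oag_leD2r (c *+ i)) subrK; apply: oag_le_trans hbt _.
rewrite -addrA -addrA oag_leD2l mulrnDr [c *+ i + _]addrC.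
by rewrite -{1}[c *+ j + c *+ i]add0r oag_leD2r.
Qed.

End RingValuation.

Section LinearFamily.
Variables (K : fieldType) (L : divOAG) (v : K -> option L)
  (nu : {poly K} -> option L) (Qs : {poly K} -> Prop) (F : {poly K}).
Hypothesis hv : is_valuation v.
Hypothesis hnu : is_poly_valuation_ext v nu.
Hypothesis hQs_XsubC : forall Q, Qs Q -> Q = 'X - (lin_root Q)%:P.
Hypothesis hQs_nonempty : exists Q, Qs Q.
Hypothesis hQs_nomax : forall Q, Qs Q -> exists R, Qs R /\ olt (nu Q) (nu R).
Hypothesis hF : limit_key_poly nu Qs F.
Implicit Types (f g Q R S U W : {poly K}).

Lemma v_eq0 a : v a = None -> a = 0.
Proof. by move=> e; case: hv => h _ _; apply/h. Qed.

Lemma nuC c : nu c%:P = v c. Proof. by case: hnu. Qed.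

Let vV : ring_valuation v.
Proof.
have v0 : v 0 = None by case: hv => h _ _; apply/h.
case: hv => _ vM vD; split => //.
have := vM 1 1; rewrite mulr1; case e: (v 1) => [x|] /=.
  by case=> h; congr Some; apply: (@addrI _ x); rewrite -h addr0.
by move: e => /v_eq0 /eqP; rewrite oner_eq0.
Qed.

Let nuV : ring_valuation nu.
Proof.
case: hnu => _ nuM nuD; split => //; first by rewrite -polyC0 nuC (val0 vV).
by rewrite -polyC1 nuC (val1 vV).
Qed.

Lemma nu_Qs_fin Q : Qs Q -> exists c, nu Q = Some c.
Proof.
move=> /hQs_nomax [R [_ hlt]]; case e: (nu Q) => [c|]; first by exists c.
by move: hlt; rewrite e /olt; case: (nu R).
Qed.

Lemma nu_root_diff Q R : Qs Q -> Qs R -> olt (nu Q) (nu R) ->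
  v (lin_root R - lin_root Q) = nu Q.
Proof.
move=> hQ hR hlt.
have e : (lin_root R - lin_root Q)%:P = Q - R.
  by rewrite [in RHS](hQs_XsubC hQ) [in RHS](hQs_XsubC hR) polyCB; ring.
rewrite -nuC e; apply: ole_anti.
  have := valD nuV R (Q - R); rewrite [R + _]addrC subrK.
  case: (omin_eq (nu R) (nu (Q - R))) => -> // hRQ.
  by move: hlt; rewrite oltNge hRQ.
apply: (ole_trans _ (valD nuV Q (- R))); rewrite (valN nuV).
by apply: ole_omin; [apply: ole_refl | apply: olt_le].
Qed.

Lemma Gam_val a x : v a = Some x -> Gam v x.
Proof. by move=> h; exists 1%N; split => //; exists a; rewrite mulr1n. Qed.

Lemma Gam_add x y : Gam v x -> Gam v y -> Gam v (x + y).
Proof.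
move=> [n [n_gt0 [a ha]]] [m [m_gt0 [b hb]]].
exists (n * m)%N; split; first by rewrite muln_gt0 n_gt0 m_gt0.
exists (a ^+ m * b ^+ n); rewrite (valM vV) (valX vV m ha) (valX vV n hb) /=.
by rewrite mulrnDl -!mulrnA [(m * n)%N]mulnC.
Qed.

Lemma Gam_mulrn x n : Gam v x -> Gam v (x *+ n).
Proof.
move=> hx; elim: n => [|n IH]; first by rewrite mulr0n; apply: (Gam_val (val1 vV)).
by rewrite mulrS; apply: Gam_add.
Qed.

Lemma Gam_nu_Qs Q c : Qs Q -> nu Q = Some c -> Gam v c.
Proof.
move=> hQ hc; have [R [hR hlt]] := hQs_nomax hQ.
by apply: (@Gam_val (lin_root R - lin_root Q)); rewrite nu_root_diff.
Qed.

(* The value of the j-th term of the Q-expansion of g, see [qterm_qcoef]. *)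
Definition qterm g Q j := oadd (v (g^`N(j)).[lin_root Q]) (onat (nu Q) j).

Lemma qterm_qcoef g Q j : Qs Q ->
  oadd (nu (qcoef Q g j)) (onat (nu Q) j) = qterm g Q j.
Proof. by move=> hQ; rewrite {1}(hQs_XsubC hQ) qcoef_XsubC nuC. Qed.

Lemma nuQ_qterm g Q : Qs Q ->
  nuQ nu Q g = ominl [seq qterm g Q i | i <- iota 0 (size g)].
Proof.
move=> hQ; have [c hc] := nu_Qs_fin hQ; rewrite /nuQ /ominl; congr foldr.
by apply: eq_map => i; rewrite (valM nuV) -qterm_qcoef // (valX nuV i hc) hc.
Qed.

Lemma qterm_size_le g Q j : (size g <= j)%N -> qterm g Q j = None.
Proof. by move=> hj; rewrite /qterm nderivn_poly0 // horner0 (val0 vV). Qed.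

Lemma nuQ_le_qterm g Q j : Qs Q -> ole (nuQ nu Q g) (qterm g Q j).
Proof.
move=> hQ; case: (ltnP j (size g)) => hj; last by rewrite qterm_size_le // ole_None.
by rewrite nuQ_qterm //; apply/ominl_le/map_f; rewrite mem_iota.
Qed.

Lemma nuQ_attained g Q : Qs Q -> g != 0 ->
  exists2 j, (j < size g)%N & nuQ nu Q g = qterm g Q j.
Proof.
move=> hQ g_neq0.
have : [seq qterm g Q i | i <- iota 0 (size g)] != [::].
  by rewrite -size_eq0 size_map size_iota -lt0n size_poly_gt0.
move=> /ominl_mem /mapP [j]; rewrite mem_iota add0n => /andP [_ hj] e.
by exists j; rewrite // nuQ_qterm.
Qed.

Lemma nuQ_neq_None g Q : Qs Q -> g != 0 -> nuQ nu Q g != None.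
Proof.
move=> hQ g_neq0; apply: contra g_neq0 => /eqP nuQ_None; apply/eqP.
apply: (@nderivn_horner0_eq0 _ _ (lin_root Q)) => j _.
have [c hc] := nu_Qs_fin hQ.
have := nuQ_le_qterm g j hQ; rewrite nuQ_None /qterm hc.
by case e: (v _) => //= _; apply: v_eq0.
Qed.

Definition ultimately (P : {poly K} -> Prop) :=
  exists Q0, Qs Q0 /\ forall R, Qs R -> olt (nu Q0) (nu R) -> P R.

Lemma ultimately_True : ultimately (fun _ => True).
Proof. by have [Q hQ] := hQs_nonempty; exists Q. Qed.

Lemma ultimately_mono P P' :
  ultimately P -> (forall R, Qs R -> P R -> P' R) -> ultimately P'.
Proof. by case=> Q0 [hQ0 hP] hPP'; exists Q0; split => // R hR hlt; apply/hPP'/hP. Qed.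

Lemma ultimately_and P1 P2 :
  ultimately P1 -> ultimately P2 -> ultimately (fun R => P1 R /\ P2 R).
Proof.
case=> Q1 [hQ1 hP1] [Q2 [hQ2 hP2]].
case/orP: (ole_total (nu Q1) (nu Q2)) => h.
  by exists Q2; split => // R hR hlt; split; [apply: hP1 (ole_lt_trans h hlt) | apply: hP2].
by exists Q1; split => // R hR hlt; split; [apply: hP1 | apply: hP2 (ole_lt_trans h hlt)].
Qed.

Lemma ultimately_forall n (P : nat -> {poly K} -> Prop) :
  (forall j, (j < n)%N -> ultimately (P j)) ->
  ultimately (fun R => forall j, (j < n)%N -> P j R).
Proof.
elim: n => [|n IH] h.
  by apply: (ultimately_mono ultimately_True) => R _ _ j; rewrite ltn0.
apply: (ultimately_mono (ultimately_and (IH (fun j hj => h j (ltnW hj))) (h n (ltnSn n)))).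
by move=> R _ [hlt hn] j; rewrite ltnS leq_eqVlt => /predU1P [->|]; last apply: hlt.
Qed.

Lemma eventually_ultimately P : eventually nu Qs P -> ultimately P.
Proof. by case=> Q0 [hQ0 hP]; exists Q0; split => // R hR /olt_le; apply: hP. Qed.

Lemma ultimately_eventually P : ultimately P -> eventually nu Qs P.
Proof.
case=> Q0 [hQ0 hP]; have [R0 [hR0 hlt]] := hQs_nomax hQ0.
by exists R0; split => // R hR hle; apply: hP (olt_le_trans hlt hle).
Qed.

Lemma stable_le_qterm g : stable nu Qs g ->
  eventually nu Qs (fun R => nuQ nu R g = nu g /\ forall i, ole (nu g) (qterm g R i)).
Proof.
case=> Q0 [hQ0 hst]; exists Q0; split => // R hR hle.
by split => [|i]; [apply: hst | rewrite -(hst R hR hle); apply: nuQ_le_qterm].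
Qed.

Lemma qterm_ge_shift g Q R b c0 c1 : Qs Q -> Qs R -> olt (nu Q) (nu R) ->
  nu Q = Some c0 -> nu R = Some c1 -> (forall j, ole (Some b) (qterm g Q j)) ->
  forall i, ole (Some (b + (c1 - c0) *+ i)) (qterm g R i).
Proof.
move=> hQ hR hlt hc0 hc1 hb i.
have hd : v (lin_root R - lin_root Q) = Some c0 by rewrite nu_root_diff.
have hbQ j : ole (Some b) (oadd (v (g^`N(j)).[lin_root Q]) (Some (c0 *+ j))).
  by have := hb j; rewrite /qterm hc0.
have := val_taylor_ge vV hd hbQ i; rewrite /qterm hc1; case: (v _) => [y|] //= h.
by rewrite mulrnBl addrA addrAC oag_leD2r.
Qed.

Lemma stable_nu_horner g : stable nu Qs g -> g != 0 ->
  ultimately (fun R => nu g = v g.[lin_root R]).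
Proof.
move=> /stable_le_qterm [Q0 [hQ0 hst]] g_neq0; exists Q0; split => // R hR hlt.
have [[eQ0 geQ0] [eR _]] := (hst Q0 hQ0 (ole_refl _), hst R hR (olt_le hlt)).
have [c0 hc0] := nu_Qs_fin hQ0; have [c1 hc1] := nu_Qs_fin hR.
have [b hb] : exists b, nu g = Some b.
  by case e: (nu g) (nuQ_neq_None hQ0 g_neq0) => [b|]; [exists b | rewrite eQ0 e].
have geQ0b j : ole (Some b) (qterm g Q0 j) by rewrite -hb.
have hge := qterm_ge_shift hQ0 hR hlt hc0 hc1 geQ0b.
(* Beyond Q0 the terms of positive index exceed nu g, so nu_R(g) is the term of index 0. *)
have [[|i] _ e] := nuQ_attained hR g_neq0; rewrite eR in e.
  by rewrite e /qterm nderivn0 hc1 /= mulr0n oadd0.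
have d_gt0 : oag_lt 0 (c1 - c0) by apply: olt_Some_subr_gt0; rewrite -hc0 -hc1.
exfalso; move: (hge i.+1); rewrite -e hb /=; apply/negP.
exact: oag_addr_pmulrn_nle.
Qed.

Lemma F_neq0 : F != 0.
Proof. by case: hF => /monic_neq0. Qed.

Lemma stable_size_lt g : g != 0 -> (size g < size F)%N -> stable nu Qs g.
Proof.
move=> g_neq0 g_small; set c := lead_coef g; set h := c^-1 *: g.
have c_neq0 : c != 0 by rewrite lead_coef_eq0.
have gE : g = c *: h by rewrite /h scalerA mulfV // scale1r.
have sh : size h = size g by rewrite size_scale // invr_eq0.
have [Q0 [hQ0 hst]] : stable nu Qs h.
  have h_monic : h \is monic by apply/monicP; rewrite lead_coefZ mulVf.
  apply: NNPP => unst; case: hF => _ _ /(_ _ h_monic unst).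
  by rewrite sh leqNgt g_small.
have [x hx] : exists x, v c = Some x.
  by case e: (v c) => [x|]; [exists x | move/v_eq0: e; move/eqP: c_neq0].
exists Q0; split => // R hR hle; rewrite nuQ_qterm // -sh.
have -> : [seq qterm g R i | i <- iota 0 (size h)] =
          [seq oadd (Some x) (qterm h R i) | i <- iota 0 (size h)].
  by apply: eq_map => i; rewrite /qterm gE nderivnZ hornerZ (valM vV) hx oaddA.
by rewrite ominl_oaddl -nuQ_qterm // hst // gE -mul_polyC (valM nuV) nuC hx.
Qed.

Lemma qterm_nderivn j : (0 < j)%N ->
  ultimately (fun R => qterm F R j = oadd (nu F^`N(j)) (onat (nu R) j)).
Proof.
move=> j_gt0; have [dj0|dj_neq0] := eqVneq (F^`N(j)) 0.
  apply: (ultimately_mono ultimately_True) => R _ _.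
  by rewrite /qterm dj0 horner0 (val0 vV) (val0 nuV).
have dj_stable := stable_size_lt dj_neq0 (size_nderivn_lt F_neq0 j_gt0).
by apply: (ultimately_mono (stable_nu_horner dj_stable dj_neq0)) => R _ ->.
Qed.

Lemma qterm_Gam g Q j x : Qs Q -> qterm g Q j = Some x -> Gam v x.
Proof.
move=> hQ; have [c hc] := nu_Qs_fin hQ; rewrite /qterm hc.
case e: (v _) => [y|] //= [<-].
by apply: Gam_add; [apply: Gam_val e | apply/Gam_mulrn/(Gam_nu_Qs hQ hc)].
Qed.

Local Notation above := (above_deltaL v nu Qs F).

Lemma nuQ_not_above Q : Qs Q -> ~ above (nuQ nu Q F).
Proof.
move=> hQ; case e: (nuQ nu Q F) (nuQ_neq_None hQ F_neq0) => [m|] // _ [m_Gam]; apply.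
by split => //; exists Q; rewrite e ole_refl.
Qed.

Lemma above_le a b : ole a b -> above a -> (forall y, b = Some y -> Gam v y) -> above b.
Proof.
case: b => [y|] hab; last by move=> *; exact: I.
case: a hab => [x|] // hxy [x_Gam x_high] hb; split; first exact: hb.
case=> _ [Q [hQ hyQ]]; apply: x_high; split => //; exists Q; split => //.
exact: ole_trans hxy hyQ.
Qed.

Lemma Jset_ultimately_le k l : Jset v nu Qs F k -> (l <= (size F).-1 %/ 1)%N ->
  ultimately (fun R => ole (qterm F R k) (qterm F R l)) -> Jset v nu Qs F l.
Proof.
case=> _ /eventually_ultimately hk hl hkl; split => //; apply: ultimately_eventually.
apply: (ultimately_mono (ultimately_and hk hkl)) => R hR [].
by rewrite !qterm_qcoef // => hak hle; apply: above_le hle hak _ => y; apply: qterm_Gam.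
Qed.

Lemma qterm_le_of_bin k l : (0 < k)%N -> (k < l)%N -> v 'C(l, k)%:R = Some 0 ->
  ultimately (fun R => ole (qterm F R k) (qterm F R l)).
Proof.
move=> k_gt0 lt_kl vC.
have dlk a : (F^`N(k)^`N(l - k)).[a] = (F^`N(l)).[a] * 'C(l, k)%:R.
  by rewrite nderivn_nderivn subnKC ?(ltnW lt_kl) // hornerMn mulr_natr.
have [dk0|dk_neq0] := eqVneq (F^`N(k)) 0.
  apply: (ultimately_mono ultimately_True) => R _ _.
  have := dlk (lin_root R); rewrite dk0 nderivn_poly0 ?size_poly0 // horner0.
  move=> /esym /eqP; rewrite mulf_eq0 => /orP [/eqP dl0|/eqP C0].
    by rewrite /qterm dl0 (val0 vV) ole_None.
  by move: vC; rewrite C0 (val0 vV).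
have dk_stable := stable_size_lt dk_neq0 (size_nderivn_lt F_neq0 k_gt0).
apply: (ultimately_mono (ultimately_and (stable_nu_horner dk_stable dk_neq0)
  (eventually_ultimately (stable_le_qterm dk_stable)))) => R hR [e [_ hge]].
have [c hc] := nu_Qs_fin hR.
have := hge (l - k)%N; rewrite /qterm hc /= dlk (valM vV) vC -e oadd0.
case: (nu _) => [b|] //=; case: (v _) => [y|] //= h.
by rewrite -(subnK (ltnW lt_kl)) mulrnDr addrA oag_leD2r.
Qed.

Lemma qterm0_unique_min g R U j0 : Qs R -> Qs U -> olt (nu R) (nu U) ->
  (j0 < size g)%N -> qterm g R j0 != None ->
  (forall j, (j < size g)%N -> j != j0 -> olt (qterm g R j0) (qterm g R j)) ->
  qterm g U 0 = qterm g R j0.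
Proof.
move=> hR hU hlt lt_j0 fin hmin; have [c hc] := nu_Qs_fin hR.
have termE j :
    v ((g^`N(j)).[lin_root R] * (lin_root U - lin_root R) ^+ j) = qterm g R j.
  have hd : v (lin_root U - lin_root R) = Some c by rewrite nu_root_diff.
  by rewrite (valM vV) (valX vV j hd) /qterm hc.
have [cU hcU] := nu_Qs_fin hU.
rewrite {1}/qterm nderivn0 hcU /= mulr0n oadd0.
rewrite (_ : lin_root U = lin_root R + (lin_root U - lin_root R)); last first.
  by rewrite addrC subrK.
rewrite nderiv_taylor; last exact: mulrC.
rewrite (val_sum_min_unique vV (f := fun j =>
  (g^`N(j)).[lin_root R] * (lin_root U - lin_root R) ^+ j) lt_j0) ?termE //.
by move=> j hj hne; rewrite !termE; apply: hmin.
Qed.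

Lemma exists_qterm_strict_min W : Qs W ->
  (forall R j, Qs R -> olt (nu W) (nu R) -> (0 < j)%N -> (j < size F)%N ->
     qterm F R j = oadd (nu F^`N(j)) (onat (nu R) j)) ->
  (forall R, Qs R -> olt (nu W) (nu R) -> nuQ nu R F != qterm F R 0) ->
  exists R j0, [/\ Qs R, olt (nu W) (nu R), (j0 < size F)%N, nuQ nu R F = qterm F R j0 &
    forall j, (j < size F)%N -> j != j0 -> olt (qterm F R j0) (qterm F R j)].
Proof.
move=> hW affine no0.
have min_pos R j : Qs R -> olt (nu W) (nu R) -> nuQ nu R F = qterm F R j -> (0 < j)%N.
  by move=> hR hWR e; rewrite lt0n; apply/eqP => j0; move: (no0 R hR hWR); rewrite e j0 eqxx.
pose attained j := (j < size F)%N /\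
  exists R, [/\ Qs R, olt (nu W) (nu R) & nuQ nu R F = qterm F R j].
have [S0 [hS0 hWS0]] := hQs_nomax hW; have [i i_lt ei] := nuQ_attained hS0 F_neq0.
have : attained i by split => //; exists S0.
(* Strong induction: a smaller index attaining the minimum further on is handled by the
   induction hypothesis, larger indices are ruled out by their steeper growth. *)
elim/ltn_ind: i {i_lt ei} => j IH [j_lt [S [hS hWS eS]]].
have j_gt0 := min_pos S j hS hWS eS.
have [R [hR hSR]] := hQs_nomax hS; have hWR := olt_trans hWS hSR.
have [c0 hc0] := nu_Qs_fin hS; have [c1 hc1] := nu_Qs_fin hR.
have [b0 hb0] : exists b0, nu F^`N(j) = Some b0.
  move: (nuQ_neq_None hS F_neq0); rewrite eS affine // hc0.
  by case: (nu _) => [b0 _|//]; exists b0.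
have grow j' : (j < j')%N -> (j' < size F)%N -> olt (qterm F R j) (qterm F R j').
  move=> lt_jj' j'_lt; have j'_gt0 : (0 < j')%N by apply: leq_ltn_trans lt_jj'.
  have := nuQ_le_qterm F j' hS; rewrite eS !affine // hc0 hc1 hb0.
  by apply: olt_affine_steeper; rewrite // -hc0 -hc1.
have [j1 j1_lt eR] := nuQ_attained hR F_neq0.
case: (ltngtP j1 j) => [lt_j1j | lt_jj1 | j1j]; last rewrite {j1}j1j in eR j1_lt.
- by apply: (IH j1 lt_j1j); split => //; exists R.
- by move: (grow j1 lt_jj1 j1_lt); rewrite -eR oltNge nuQ_le_qterm.
case: (classic (exists2 j', (j' < j)%N & nuQ nu R F = qterm F R j')) => [[j' lt_j'j e']|none].
  by apply: (IH j' lt_j'j); split; [apply: ltn_trans j_lt | exists R].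
exists R, j; split => // j' j'_lt ne.
case: (ltngtP j' j) => [lt_j'j | lt_jj' | e]; last by rewrite e eqxx in ne.
  rewrite /olt -eR nuQ_le_qterm //=; apply/eqP => e'.
  by apply: none; exists j'.
exact: grow.
Qed.

Lemma notin_Jset0 : ~ Jset v nu Qs F 0.
Proof.
case=> _ /eventually_ultimately hJ.
have affine_ult : ultimately (fun R => forall j, (j < size F)%N -> (0 < j)%N ->
    qterm F R j = oadd (nu F^`N(j)) (onat (nu R) j)).
  apply: ultimately_forall => j _; case: (posnP j) => [-> | j_gt0].
    by apply: (ultimately_mono ultimately_True).
  by apply: (ultimately_mono (qterm_nderivn j_gt0)) => R _ e _.
have [W [hW hWP]] := ultimately_and hJ affine_ult.
have above0 R : Qs R -> olt (nu W) (nu R) -> above (qterm F R 0).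
  by move=> hR hWR; rewrite -qterm_qcoef //; case: (hWP R hR hWR).
have affine R j : Qs R -> olt (nu W) (nu R) -> (0 < j)%N -> (j < size F)%N ->
    qterm F R j = oadd (nu F^`N(j)) (onat (nu R) j).
  by move=> hR hWR j_gt0 j_lt; case: (hWP R hR hWR) => _ /(_ j j_lt j_gt0).
have no0 R : Qs R -> olt (nu W) (nu R) -> nuQ nu R F != qterm F R 0.
  by move=> hR hWR; apply/eqP => e; apply: (nuQ_not_above hR); rewrite e; apply: above0.
have [R [j0 [hR hWR j0_lt e hmin]]] := exists_qterm_strict_min hW affine no0.
have [U [hU hRU]] := hQs_nomax hR.
have fin : qterm F R j0 != None by rewrite -e nuQ_neq_None // F_neq0.
have T0U := qterm0_unique_min hR hU hRU j0_lt fin hmin.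
by apply: (nuQ_not_above hR); rewrite e -T0U; apply: above0 (olt_trans hWR hRU).
Qed.

Lemma dvdn_bin_Jset_Bset p k l : char_exp v p -> Jset v nu Qs F k -> Bset v nu Qs F l ->
  (k < l)%N -> (p %| 'C(l, k))%N.
Proof.
case=> [[p_prime vp_gt0] | [-> _]] hk [hl l_notJ] lt_kl; last by rewrite dvd1n.
have k_gt0 : (0 < k)%N by case: (posnP k) hk => [-> /notin_Jset0 [] | //].
apply/idPn => p_ndvd; apply: l_notJ; apply: Jset_ultimately_le hk hl _.
exact: qterm_le_of_bin k_gt0 lt_kl (val_natr_coprime vV p_prime vp_gt0 p_ndvd).
Qed.

End LinearFamily.

Theorem mainTheorem19 (K : fieldType) (L : divOAG) (v : K -> option L)
  (p : nat) (nu : {poly K} -> option L) (Qs : {poly K} -> Prop)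
  (F : {poly K}) :
  is_valuation v ->
  char_exp v p ->
  is_poly_valuation_ext v nu ->
  well_specified v nu ->
  (* m = 1 : Psi_1 nonempty, without element of maximal value *)
  (exists Q, Psi nu 1 Q) ->
  (forall Q, Psi nu 1 Q -> exists R, Psi nu 1 R /\ olt (nu Q) (nu R)) ->
  (* Qs : subset of Psi_1, well-ordered by nu-values, cofinal *)
  (forall Q, Qs Q -> Psi nu 1 Q) ->
  (forall Q R, Qs Q -> Qs R -> nu Q = nu R -> Q = R) ->
  (forall S : {poly K} -> Prop, (forall Q, S Q -> Qs Q) -> (exists Q, S Q) ->
     exists Q0, S Q0 /\ forall Q, S Q -> ole (nu Q0) (nu Q)) ->
  (forall P, Psi nu 1 P -> exists Q, Qs Q /\ ole (nu P) (nu Q)) ->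
  limit_key_poly nu Qs F ->
  ~ vert_bounded (gammaL v nu Qs) ->
  (* v(p) > H *)
  (forall h, invariance_group (Gam v) (gammaL v nu Qs) h ->
     olt (Some h) (v p%:R)) ->
  forall k l, Jset v nu Qs F k -> Bset v nu Qs F l -> (k < l)%N ->
    (p %| 'C(l, k))%N.
Proof.
move=> hv hce hnu _ hPsi hnomax hQsPsi _ _ hcof hF _ _ k l hk hl lt_kl.
have Qs_XsubC Q : Qs Q -> Q = 'X - (lin_root Q)%:P.
  move=> /hQsPsi [[Q_monic _] Q_size]; apply: monic_size2_XsubC => //.
  by move: Q_size; case: (size Q) => // n /= ->.
have Qs_nonempty : exists Q, Qs Q.
  by have [P /hcof [Q [hQ _]]] := hPsi; exists Q.
have Qs_nomax Q : Qs Q -> exists R, Qs R /\ olt (nu Q) (nu R).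
  move=> /hQsPsi /hnomax [P [/hcof [R [hR hPR]] hQP]].
  by exists R; split => //; apply: olt_le_trans hQP hPR.
exact: (dvdn_bin_Jset_Bset hv hnu Qs_XsubC Qs_nonempty Qs_nomax hF hce hk hl lt_kl).
Qed.
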